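(* Let $(N_\mu)_{\mu\in\mathbb N}$ be positive integers with $N_{\mu+1}/N_\mu\to\infty$, and such that $\varepsilon_\mu:=\frac12\sqrt{N_\mu/N_{\mu+1}}$ is non-increasing. Define $\Delta:\mathbb N\times\mathbb N\to[0,\infty]$ by $$\Delta(n,m)=\inf\Big\{\sum_k\varepsilon_{\mu_k}:\ (\mu_k)\text{ a finite family of indices with } m\le\sum_kN_{\mu_k}\le n\Big\}$$ (infimum of the empty set $=+\infty$). Then $\Delta$ satisfies $\Delta(n+1,m)\le\Delta(n,m)\le\Delta(n,m+1)$ and $\Delta(n_1+n_2,m_1+m_2)\le\Delta(n_1,m_1)+\Delta(n_2,m_2)$, and $\Delta(N_\mu,N_\mu)\to0$ (so rate $1$ is attained along the sequence $(N_\mu,N_\mu)$). However, for $n_\mu=N_{\mu+1}-1$ and $m_\mu=\lceil\sqrt{N_\mu N_{\mu+1}}\rceil$ one has $m_\mu/n_\mu\to0$ while $\liminf_\mu\Delta(n_\mu,m_\mu)\ge\frac12$. *)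

From HB Require Import structures.
From mathcomp Require Import all_boot all_order all_algebra.
From mathcomp Require Import all_classical all_reals all_analysis.
Set Implicit Arguments. Unset Strict Implicit. Unset Printing Implicit Defensive.
Import Order.TTheory GRing.Theory Num.Theory.
Import numFieldNormedType.Exports.
Local Open Scope classical_set_scope.
Local Open Scope ring_scope.

Definition eps (R : realType) (N : nat -> nat) (mu : nat) : R :=
  2^-1 * Num.sqrt ((N mu)%:R / (N mu.+1)%:R).

(* A finite family of indices is represented by a list s : seq nat
   (repetitions allowed, order irrelevant for the sums). *)
Definition Delta (R : realType) (N : nat -> nat) (n m : nat) : \bar R :=
  ereal_inf [set ((\sum_(k <- s) eps R N k)%:E) | s in
             [set s : seq nat | (m <= \sum_(k <- s) N k <= n)%N]].

Definition nseq_ (N : nat -> nat) (mu : nat) : nat := (N mu.+1 - 1)%N.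

Definition mseq_ (R : realType) (N : nat -> nat) (mu : nat) : nat :=
  `|Num.ceil (Num.sqrt (((N mu * N mu.+1)%N)%:R : R))|%N.

From HB Require Import structures.
From mathcomp Require Import all_boot all_order all_algebra.
From mathcomp Require Import all_classical all_reals all_analysis.
From mathcomp Require Import ring lra zify.
Set Implicit Arguments. Unset Strict Implicit. Unset Printing Implicit Defensive.
Import Order.TTheory GRing.Theory Num.Theory.
Import numFieldNormedType.Exports.
Local Open Scope classical_set_scope.
Local Open Scope ring_scope.

(* Monotonicity and subadditivity hold because Delta is an infimum over index
   families (concatenating families gives subadditivity), and
   Delta (N mu) (N mu) <= eps mu -> 0.  For the lower bound, when mu is large a
   family with sum of N below N (mu+1) - 1 only uses indices k <= mu, for which
   N k <= N mu and eps k >= eps mu; hence its cost is at least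
   eps mu / N mu * m_mu >= eps mu / N mu * sqrt (N mu * N (mu+1)) = 1/2. *)

Section Delta.
Variables (R : realType) (N : nat -> nat).
Local Notation eps := (eps R N).
Local Notation Delta := (Delta R N).

Lemma eps_ge0 mu : 0 <= eps mu.
Proof. by rewrite mulr_ge0 ?sqrtr_ge0. Qed.

Lemma Delta_le_sum n m (s : seq nat) :
  (m <= \sum_(k <- s) N k <= n)%N -> (Delta n m <= (\sum_(k <- s) eps k)%:E)%E.
Proof. by move=> smn; apply: ereal_inf_lbound; exists s. Qed.

Lemma Delta_ge n m (x : \bar R) :
  (forall s : seq nat, (m <= \sum_(k <- s) N k <= n)%N ->
     (x <= (\sum_(k <- s) eps k)%:E)%E) ->
  (x <= Delta n m)%E.
Proof. by move=> lb; apply/ereal_infP => _ [s smn <-]; exact: lb. Qed.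

Lemma Delta_ge0 n m : (0 <= Delta n m)%E.
Proof. by apply: Delta_ge => s _; rewrite lee_fin sumr_ge0 // => k _; exact: eps_ge0. Qed.

Lemma Delta_Sn_le n m : (Delta n.+1 m <= Delta n m)%E.
Proof. by apply: Delta_ge => s /andP[ms sn]; apply: Delta_le_sum; rewrite ms ltnW. Qed.

Lemma Delta_le_Sm n m : (Delta n m <= Delta n m.+1)%E.
Proof. by apply: Delta_ge => s /andP[ms sn]; apply: Delta_le_sum; rewrite sn ltnW. Qed.

Lemma Delta_subadd n1 n2 m1 m2 :
  (Delta (n1 + n2) (m1 + m2) <= Delta n1 m1 + Delta n2 m2)%E.
Proof.
have [->|D1oo] := eqVneq (Delta n1 m1) +oo%E.
  by rewrite addye ?leey // gt_eqF // (lt_le_trans ltNy0 (Delta_ge0 _ _)).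
have [->|D2oo] := eqVneq (Delta n2 m2) +oo%E.
  by rewrite addey ?leey // gt_eqF // (lt_le_trans ltNy0 (Delta_ge0 _ _)).
have D1fin : Delta n1 m1 \is a fin_num by rewrite ge0_fin_numE ?Delta_ge0 // ltey.
have D2fin : Delta n2 m2 \is a fin_num by rewrite ge0_fin_numE ?Delta_ge0 // ltey.
rewrite -lee_subel_addr //; apply: Delta_ge => s1 /andP[ms1 s1n].
rewrite lee_subel_addr // addeC -lee_subel_addr //; apply: Delta_ge => s2 /andP[ms2 s2n].
rewrite lee_subel_addr // -EFinD -!big_cat; apply: Delta_le_sum.
by rewrite big_cat; apply/andP; split; rewrite addnC leq_add.
Qed.

Lemma Delta_NN_le_eps mu : (Delta (N mu) (N mu) <= (eps mu)%:E)%E.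
Proof.
by have := @Delta_le_sum (N mu) (N mu) [:: mu]; rewrite !big_seq1 leqnn; apply.
Qed.

Lemma Delta_ge_scaled (c : R) n m : 0 <= c ->
  (forall k, (N k <= n)%N -> c * (N k)%:R <= eps k) -> ((c * m%:R)%:E <= Delta n m)%E.
Proof.
move=> c0 cNk_le; apply: Delta_ge => s /andP[ms sn]; rewrite lee_fin.
apply: (@le_trans _ _ (c * (\sum_(k <- s) N k)%:R)); first by rewrite ler_wpM2l ?ler_nat.
rewrite natr_sum mulr_sumr big_seq [leRHS]big_seq; apply: ler_sum => k ks.
by apply: cNk_le; apply: leq_trans sn; rewrite (big_rem k) ?leq_addr.
Qed.

End Delta.

Lemma sqrtrM_divr (R : rcfType) (a b : R) : 0 <= a -> 0 < b ->
  Num.sqrt (a * b) = Num.sqrt (a / b) * b.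
Proof.
move=> a0 b0; have -> : a * b = a / b * b ^+ 2 by field; rewrite gt_eqF.
by rewrite sqrtrM ?sqrtr_sqr ?gtr0_norm // divr_ge0 // ltW.
Qed.

Section eps_identities.
Variables (R : realType) (N : nat -> nat) (mu : nat).
Hypothesis NSmu_gt0 : (0 < N mu.+1)%N.

Lemma sqrt_NNSE : Num.sqrt ((N mu * N mu.+1)%N%:R : R) = 2 * eps R N mu * (N mu.+1)%:R.
Proof. by rewrite natrM sqrtrM_divr ?ltr0n // /eps mulrA mulrV ?mul1r // unitfE. Qed.

Hypothesis Nmu_gt0 : (0 < N mu)%N.

Lemma eps_div_sqrt_NNS : eps R N mu / (N mu)%:R * Num.sqrt ((N mu * N mu.+1)%N%:R) = 2^-1.
Proof.
have epsE : eps R N mu ^+ 2 = 2^-1 ^+ 2 * ((N mu)%:R / (N mu.+1)%:R).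
  by rewrite exprMn sqr_sqrtr // divr_ge0.
have N0 : (N mu)%:R != 0 :> R by rewrite pnatr_eq0 -lt0n.
have NS0 : (N mu.+1)%:R != 0 :> R by rewrite pnatr_eq0 -lt0n.
rewrite sqrt_NNSE.
transitivity (2 * eps R N mu ^+ 2 * (N mu.+1)%:R / (N mu)%:R).
  by rewrite expr2; field.
by rewrite epsE; field; rewrite N0 NS0.
Qed.

End eps_identities.

Lemma mseqE (R : realType) N mu :
  (mseq_ R N mu)%:R = (Num.ceil (Num.sqrt ((N mu * N mu.+1)%N%:R : R)))%:~R :> R.
Proof.
rewrite /mseq_ natr_absz ger0_norm // ceil_ge0.
exact: lt_le_trans (ltrN10 _) (sqrtr_ge0 _).
Qed.

Lemma mseq_ge_sqrt (R : realType) N mu :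
  Num.sqrt ((N mu * N mu.+1)%N%:R) <= (mseq_ R N mu)%:R :> R.
Proof. by rewrite mseqE ceil_ge. Qed.

Lemma mseq_lt_sqrtD1 (R : realType) N mu :
  (mseq_ R N mu)%:R < Num.sqrt ((N mu * N mu.+1)%N%:R) + 1 :> R.
Proof. by rewrite mseqE -ltrBlDr -[1]/(1%:~R) -intrB ceilB1_lt. Qed.

Section eventually_increasing.
Variables (u : nat -> nat) (K : nat).
Hypothesis u_incr : forall i, (K <= i)%N -> (u i < u i.+1)%N.

Lemma incr_from_ltn i j : (K <= i)%N -> (i < j)%N -> (u i < u j)%N.
Proof.
move=> Ki ij; have Kj : (K <= j)%N := leq_trans Ki (ltnW ij).
apply: (homo_ltn_in (D := [pred i | K <= i]%N) ltn_trans) ij => //=.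
- by move=> i' j' Ki' _ k /andP[/ltnW i'k _]; exact: leq_trans Ki' i'k.
- by move=> k /= Kk _; exact: u_incr.
Qed.

Lemma incr_from_leq i j : (K <= i)%N -> (i <= j)%N -> (u i <= u j)%N.
Proof. by move=> Ki; rewrite leq_eqVlt => /predU1P[->//|/(incr_from_ltn Ki)/ltnW]. Qed.

Lemma incr_from_geq j : (j <= u (K + j))%N.
Proof. by elim: j => // j IHj; rewrite addnS (leq_ltn_trans IHj) ?u_incr ?leq_addr. Qed.

Lemma incr_from_le_last mu k : (K + \max_(i < K) u i <= mu)%N -> (k <= mu)%N ->
  (u k <= u mu)%N.
Proof.
move=> muK kmu; have Kmu : (K <= mu)%N := leq_trans (leq_addr _ _) muK.
have [kK|Kk] := ltnP k K.
  apply: leq_trans (leq_bigmax (F := fun i : 'I_K => u i) (Ordinal kK)) _.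
  have := incr_from_geq (mu - K); rewrite subnKC //; apply: leq_trans.
  by rewrite leq_subRL.
exact: incr_from_leq.
Qed.

End eventually_increasing.

Lemma mseq_div_nseq_le (R : realType) N mu :
  (0 < N mu)%N -> (2 * N mu <= N mu.+1)%N ->
  (mseq_ R N mu)%:R / (nseq_ N mu)%:R <= 8 * eps R N mu.
Proof.
move=> Nmu_gt0 N2; have NS_gt0 : (0 < N mu.+1)%N by lia.
have b2 : 2 <= (N mu.+1)%:R :> R by rewrite (ler_nat _ 2); lia.
have sqrt_ge1 : 1 <= Num.sqrt ((N mu * N mu.+1)%N%:R) :> R.
  by rewrite -[leLHS]sqrtr1 ler_sqrt // ler1n muln_gt0 Nmu_gt0.
have m_lt := mseq_lt_sqrtD1 R N mu; rewrite sqrt_NNSE // in m_lt sqrt_ge1.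
(* m < 2 eps N' + 1 <= 4 eps N' as 1 <= 2 eps N', while n = N' - 1 >= N' / 2. *)
rewrite /nseq_ natrB // ler_pdivrMr; last by rewrite subr_gt0; lra.
have := eps_ge0 R N mu; nra.
Qed.

Lemma limn_einf_ge (R : realType) (u : (\bar R)^nat) (c : \bar R) :
  (\forall n \near \oo, c <= u n)%E -> (c <= limn_einf u)%E.
Proof.
move=> [M _ Mu]; rewrite limn_einf_lim; apply: lime_ge; first exact: is_cvg_einfs.
near=> n; apply/ereal_infP => _ [k /= nk <-]; apply: Mu => /=.
by apply: leq_trans nk; near: n; exact: nbhs_infty_ge.
Unshelve. all: by end_near. Qed.

Section fast_growth.
Variables (R : realType) (N : nat -> nat).
Hypothesis Npos : forall mu, (0 < N mu)%N.
Hypothesis ratio_oo : (fun mu => (N mu.+1)%:R / (N mu)%:R : R) @ \oo --> +oo.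

Lemma eps_cvg0 : eps R N @ \oo --> 0.
Proof.
have inv_ratio : (fun mu => (N mu)%:R / (N mu.+1)%:R : R) @ \oo --> 0.
  under eq_fun do rewrite -invf_div.
  by apply/gtr0_cvgV0 => //; apply: nearW => mu; rewrite divr_gt0 ?ltr0n.
rewrite -(mulr0 2^-1) -sqrtr0.
apply: cvgM; first exact: cvg_cst.
exact: (continuous_cvg _ (@sqrt_continuous R 0)) inv_ratio.
Qed.

Lemma N_double_near : \forall mu \near \oo, (2 * N mu <= N mu.+1)%N.
Proof.
apply: filterS (cvgry_ge ratio_oo 2) => mu.
by rewrite ler_pdivlMr ?ltr0n // -natrM ler_nat.
Qed.

Lemma N_eventually_incr : exists K, forall mu, (K <= mu)%N -> (N mu < N mu.+1)%N.
Proof.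
by have [K _ N2] := N_double_near; exists K => mu /N2 /=; have := Npos mu; lia.
Qed.

Lemma Delta_NN_cvg0 : (fun mu => Delta R N (N mu) (N mu)) @ \oo --> 0%E.
Proof.
apply: (@squeeze_cvge _ _ _ _ (fun=> 0%E) _ (fun mu => (eps R N mu)%:E)).
- by apply: nearW => mu; rewrite Delta_ge0 Delta_NN_le_eps.
- exact: cvg_cst.
- by apply: cvg_EFin; [exact: nearW | exact: eps_cvg0].
Qed.

Lemma mseq_div_nseq_cvg0 :
  (fun mu => (mseq_ R N mu)%:R / (nseq_ N mu)%:R : R) @ \oo --> 0.
Proof.
apply: (@squeeze_cvgr _ _ _ _ (fun=> 0) (fun mu => 8 * eps R N mu)).
- by apply: filterS N_double_near => mu N2; rewrite divr_ge0 ?mseq_div_nseq_le.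
- exact: cvg_cst.
- by rewrite -(mulr0 8); apply: cvgM; [exact: cvg_cst | exact: eps_cvg0].
Qed.

Hypothesis eps_noninc : forall mu, eps R N mu.+1 <= eps R N mu.

Lemma Delta_nseq_mseq_ge_half :
  \forall mu \near \oo, ((2^-1 : R)%:E <= Delta R N (nseq_ N mu) (mseq_ R N mu))%E.
Proof.
have [K N_incr] := N_eventually_incr.
have eps_anti := (nonincreasing_seqP (eps R N)).1 eps_noninc.
near=> mu.
have muK : (K + \max_(i < K) N i <= mu)%N by near: mu; exact: nbhs_infty_ge.
have Kmu : (K <= mu)%N := leq_trans (leq_addr _ _) muK.
set c := eps R N mu / (N mu)%:R.
have c0 : 0 <= c by rewrite divr_ge0 ?eps_ge0.
apply: (@le_trans _ _ ((c * (mseq_ R N mu)%:R)%:E)).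
  by rewrite lee_fin -(eps_div_sqrt_NNS R (Npos mu.+1) (Npos mu)) ler_wpM2l ?mseq_ge_sqrt.
apply: Delta_ge_scaled => // k Nk_le.
have kmu : (k <= mu)%N.
  rewrite leqNgt; apply/negP => /(incr_from_leq N_incr (leq_trans Kmu _)).
  by move: Nk_le; rewrite /nseq_; have := Npos mu.+1; lia.
apply: le_trans (eps_anti _ _ kmu).
rewrite -mulrA ler_piMr ?eps_ge0 // mulrC ler_pdivrMr ?ltr0n // mul1r ler_nat.
exact: incr_from_le_last muK kmu.
Unshelve. all: by end_near. Qed.

End fast_growth.

Theorem mainTheorem18 (R : realType) (N : nat -> nat)
  (Npos : forall mu, (0 < N mu)%N)
  (ratio_oo : (fun mu => (N mu.+1)%:R / (N mu)%:R : R) @ \oo --> +oo)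
  (eps_noninc : forall mu, eps R N mu.+1 <= eps R N mu) :
  [/\ (forall n m, (Delta R N n.+1 m <= Delta R N n m)%E /\
                   (Delta R N n m <= Delta R N n m.+1)%E),
      (forall n1 n2 m1 m2,
          (Delta R N (n1 + n2) (m1 + m2) <= Delta R N n1 m1 + Delta R N n2 m2)%E),
      (fun mu => Delta R N (N mu) (N mu)) @ \oo --> 0%E,
      (fun mu => (mseq_ R N mu)%:R / (nseq_ N mu)%:R : R) @ \oo --> 0
    & ((2^-1 : R)%:E <= limn_einf (fun mu => Delta R N (nseq_ N mu) (mseq_ R N mu)))%E].
Proof.
split.
- by move=> n m; split; [exact: Delta_Sn_le | exact: Delta_le_Sm].
- exact: Delta_subadd.
- exact: Delta_NN_cvg0.
- exact: mseq_div_nseq_cvg0.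
- exact/limn_einf_ge/Delta_nseq_mseq_ge_half.
Qed.
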